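(* Let $\varepsilon>0$ and let $f\colon [N]\times[D]\to[M]$ be a $(k,\varepsilon)$-extractor. Then for every set $S\subseteq[N]$, fewer than $2^k$ elements of $S$ are $\varepsilon$-poor in $S$.
   Context: $[n]=\{1,\dots,n\}$. A function $f\colon [N]\times[D]\to[M]$ is a $(k,\varepsilon)$-extractor if for all $A\subseteq[N]$ with $|A|\ge 2^k$ and all $B\subseteq[M]$, $\left|\Pr\{f(X_A,X_D)\in B\} - |B|/M\right|\le\varepsilon$, where $X_A, X_D$ are independent uniformly random elements of $A$ and $[D]$. For $S\subseteq[N]$: an element $y\in[M]$ is $b$-bad for $S$ if $|f^{-1}(y)\cap S| > bD|S|/M$ (here $f^{-1}(y)=\{u\in[N]: f(u,i)=y \text{ for some } i\in[D]\}$); an element $x\in S$ is $\varepsilon$-poor in $S$ if for more than a $2\varepsilon$-fraction of $i\in[D]$ the value $f(x,i)$ is $(1/\varepsilon)$-bad for $S$. *)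

(* [n] = {1..n} is modelled by the ordinal type 'I_n = {0..n-1}. *)
From mathcomp Require Import all_boot all_order all_algebra.
Set Implicit Arguments. Unset Strict Implicit. Unset Printing Implicit Defensive.
Import Order.TTheory GRing.Theory Num.Theory.
Local Open Scope ring_scope.

Section Ext.
Variables (R : realFieldType) (N D M : nat) (f : 'I_N -> 'I_D -> 'I_M).

(* Pr{ f(X_A, X_D) \in B } with X_A uniform on A, X_D uniform on [D], independent *)
Definition ext_prob (A : {set 'I_N}) (B : {set 'I_M}) : R :=
  #|[set p : 'I_N * 'I_D | (p.1 \in A) && (f p.1 p.2 \in B)]|%:R
    / (#|A| * D)%:R.

Definition is_extractor (k : nat) (eps : R) : Prop :=
  forall A : {set 'I_N}, (2 ^ k <= #|A|)%N ->
  forall B : {set 'I_M}, `|ext_prob A B - #|B|%:R / M%:R| <= eps.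

Definition preim (y : 'I_M) : {set 'I_N} := [set u | [exists i, f u i == y]].

Definition is_bad (b : R) (S : {set 'I_N}) (y : 'I_M) : bool :=
  b * D%:R * #|S|%:R / M%:R < #|preim y :&: S|%:R.

Definition is_poor (eps : R) (S : {set 'I_N}) (x : 'I_N) : bool :=
  (x \in S) &&
  (2 * eps < #|[set i : 'I_D | is_bad eps^-1 S (f x i)]|%:R / D%:R).

End Ext.

From Pilot Require Import Defs.
From mathcomp Require Import all_boot all_order all_algebra.
From mathcomp Require Import lra.
Import Order.TTheory GRing.Theory Num.Theory.
Local Open Scope ring_scope.

(* Let B be the set of (1/eps)-bad outputs for S. Since the sets f^{-1}(y) :&: S
   have total size at most D|S|, at most an eps-fraction of [M] is bad.  If the
   set P of eps-poor elements had 2^k elements, then f(X_P, X_D) would hit B with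
   probability more than 2 eps, i.e. more than eps above the density of B,
   contradicting the extractor property on P. *)

Lemma card_set_pairs (T1 T2 : finType) (A : {set T1}) (Q : T1 -> T2 -> bool) :
  #|[set p : T1 * T2 | (p.1 \in A) && Q p.1 p.2]| =
  (\sum_(x in A) #|[set y | Q x y]|)%N.
Proof.
rewrite -sum1_card.
transitivity (\sum_(x in A) \sum_(y | Q x y) 1)%N.
  by rewrite pair_big_dep; apply: eq_bigl => p; rewrite inE.
by apply: eq_bigr => x _; rewrite -sum1_card; apply: eq_bigl => y; rewrite inE.
Qed.

Lemma lt_mean (R : realFieldType) (I : finType) (A : {set I}) (F : I -> R) c :
  A != set0 -> (forall x, x \in A -> c < F x) ->
  c < (\sum_(x in A) F x) / #|A|%:R.
Proof.
move=> /set0Pn[x0 Ax0] cF.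
rewrite ltr_pdivlMr ?ltr0n ?card_gt0; last by apply/set0Pn; exists x0.
rewrite -sum1_card natr_sum mulr_sumr; apply: ltr_sum => [|x /cF]; last by rewrite mulr1.
by apply/hasP; exists x0; rewrite ?mem_index_enum.
Qed.

Lemma sum_nat_mem (T : finType) (A : {set T}) : (\sum_(x : T) (x \in A))%N = #|A|.
Proof. by rewrite -sum1_card [RHS]big_mkcond; apply: eq_bigr => x _; case: (x \in A). Qed.

Section Extractor.
Variables (R : realFieldType) (N D M : nat) (f : 'I_N -> 'I_D -> 'I_M).

Lemma ext_probE (A : {set 'I_N}) (B : {set 'I_M}) :
  ext_prob R f A B =
  (\sum_(x in A) #|[set i | f x i \in B]|%:R / D%:R) / #|A|%:R.
Proof.
rewrite /ext_prob (@card_set_pairs _ _ A (fun x i => f x i \in B)) natr_sum natrM.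
by rewrite -mulr_suml invfM mulrA mulrAC.
Qed.

(* [Defs.preim] is qualified because ssrbool's [preim] shadows it. *)
Lemma card_preim_mem (u : 'I_N) : (#|[set y | u \in Defs.preim f y]| <= D)%N.
Proof.
have -> : [set y | u \in Defs.preim f y] = f u @: [set: 'I_D].
  by apply/setP => y; rewrite !inE; apply/existsP/imsetP => [[i /eqP <-]|[i _ ->]];
    exists i.
by apply: leq_trans (leq_imset_card _ _) _; rewrite cardsT card_ord.
Qed.

Lemma sum_card_preimI (S : {set 'I_N}) :
  (\sum_(y : 'I_M) #|Defs.preim f y :&: S| <= #|S| * D)%N.
Proof.
under eq_bigr => y _ do rewrite -sum_nat_mem.
rewrite exchange_big /= -sum_nat_const [leqRHS]big_mkcond /=; apply: leq_sum => u _.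
case: (boolP (u \in S)) => Su; last by rewrite big1 // => y _; rewrite inE (negbTE Su) andbF.
apply: leq_trans (card_preim_mem u); rewrite -sum_nat_mem.
by apply: leq_sum => y _; rewrite !inE Su andbT.
Qed.

Lemma card_bad_le (b : R) (S : {set 'I_N}) :
  0 < b -> (0 < D)%N -> (0 < #|S|)%N ->
  #|[set y | is_bad f b S y]|%:R / M%:R <= b^-1.
Proof.
move=> b_gt0 D_gt0 S_gt0; set B := [set y | is_bad f b S y].
set d : R := D%:R; set s : R := #|S|%:R; set m : R := M%:R.
have ds_gt0 : 0 < d * s by rewrite mulr_gt0 ?ltr0n.
have weight_le : #|B|%:R * (b * d * s / m) <= d * s.
  apply: le_trans (_ : \sum_(y in B) #|Defs.preim f y :&: S|%:R <= _).
    rewrite -sum1_card natr_sum mulr_suml; apply: ler_sum => y.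
    by rewrite inE mul1r => /ltW.
  apply: le_trans (_ : \sum_(y : 'I_M) #|Defs.preim f y :&: S|%:R <= _).
    by rewrite [leRHS](bigID (mem B)) /= lerDl sumr_ge0.
  by rewrite -natr_sum -natrM mulnC ler_nat sum_card_preimI.
rewrite -(ler_pM2r (mulr_gt0 b_gt0 ds_gt0)) mulKf ?gt_eqF //; lra.
Qed.

End Extractor.

Theorem lemma7 (R : realFieldType) (N D M : nat) (f : 'I_N -> 'I_D -> 'I_M)
    (k : nat) (eps : R) :
  0 < eps -> (0 < D)%N -> is_extractor f k eps ->
  forall S : {set 'I_N},
    (#|[set x in S | is_poor f eps S x]| < 2 ^ k)%N.
Proof.
move=> eps_gt0 D_gt0 ext S; rewrite ltnNge; apply/negP => P_large.
set P := [set x in S | is_poor f eps S x]; set B := [set y | is_bad f eps^-1 S y].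
have P_neq0 : P != set0.
  by rewrite -card_gt0; apply: leq_trans P_large; rewrite expn_gt0.
have S_gt0 : (0 < #|S|)%N.
  by have /set0Pn[x /setIdP[Sx _]] := P_neq0; apply/card_gt0P; exists x.
have B_sparse : #|B|%:R / M%:R <= eps.
  by rewrite -[leRHS]invrK card_bad_le ?invr_gt0.
have P_hits_B : 2 * eps < ext_prob R f P B.
  rewrite ext_probE; apply: lt_mean => // x /setIdP[_ /andP[_]].
  suff -> : [set i | f x i \in B] = [set i | is_bad f eps^-1 S (f x i)] by [].
  by apply/setP => i; rewrite !inE.
have := ext P P_large B; move/ler_normlW; lra.
Qed.
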